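(* Let $\mathcal{G}=\{G_n\}_{n=1}^\infty$ be a graph sequence which is a large girth sequence. Then $e(\mathcal{G})=c(\mathcal{G})$.
   Context: A graph sequence is a sequence $\mathcal{G}=\{G_n\}_{n=1}^\infty$ of finite simple graphs such that $\sup_n \max_{x\in V(G_n)}\deg(x)<\infty$ and $|V(G_n)|\to\infty$. For graph sequences $\mathcal{G},\mathcal{H}$ with $V(H_n)=V(G_n)$ for all $n$, write $\mathcal{H}\prec\mathcal{G}$ if there is an integer $L>0$ such that $d_{G_n}(x,y)\le L\, d_{H_n}(x,y)$ for all $n$ and all $x,y\in V(G_n)$, where $d_{G_n},d_{H_n}$ are the shortest path metrics; $\mathcal{G}\simeq\mathcal{H}$ means $\mathcal{H}\prec\mathcal{G}$ and $\mathcal{G}\prec\mathcal{H}$. The edge number is $e(\mathcal{G})=\liminf_{n\to\infty}|E(G_n)|/|V(G_n)|$ and the cost is $c(\mathcal{G})=\inf_{\mathcal{H}\simeq\mathcal{G}} e(\mathcal{H})$. $\mathcal{G}$ is a large girth sequence if for every $k\ge1$ there is $n_k$ such that for $n\ge n_k$ the graph $G_n$ contains no cycle of length at most $k$. *)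

From HB Require Import structures.
From mathcomp Require Import all_boot all_order all_algebra.
From mathcomp Require Import all_classical all_reals all_analysis.
Set Implicit Arguments. Unset Strict Implicit. Unset Printing Implicit Defensive.
Import Order.TTheory GRing.Theory Num.Theory.

Definition simple_graph (T : finType) (e : rel T) : Prop :=
  symmetric e /\ irreflexive e.

Definition deg (T : finType) (e : rel T) (x : T) : nat := #|[set y | e x y]|.

Definition graph_seq (V : nat -> finType) (G : forall n, rel (V n)) : Prop :=
  (forall n, simple_graph (G n)) /\
  (exists D : nat, forall n (x : V n), (deg (G n) x <= D)%N) /\
  (forall N : nat, exists n0, forall n, (n0 <= n)%N -> (N <= #|V n|)%N).

(* there is a walk of length at most k from x to y, i.e. d_e(x,y) <= k
   (shortest path metric, with d = +oo between different components) *)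
Definition walk_le (T : finType) (e : rel T) (x y : T) (k : nat) : Prop :=
  exists p : seq T, [/\ path e x p, last x p = y & (size p <= k)%N].

Definition coarse_le (V : nat -> finType) (H G : forall n, rel (V n)) : Prop :=
  exists L : nat, (0 < L)%N /\
    forall n (x y : V n) (k : nat), walk_le (H n) x y k -> walk_le (G n) x y (L * k).

Definition coarse_eq (V : nat -> finType) (G H : forall n, rel (V n)) : Prop :=
  coarse_le H G /\ coarse_le G H.

Definition n_edges (T : finType) (e : rel T) : nat :=
  #|[set A : {set T} | [exists x, exists y, e x y && (A == [set x; y])]]|.

Definition edge_number (R : realType) (V : nat -> finType) (G : forall n, rel (V n))
  : \bar R :=
  limn_einf (fun n => ((n_edges (G n))%:R / (#|V n|)%:R : R)%:E).

Definition cost (R : realType) (V : nat -> finType) (G : forall n, rel (V n))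
  : \bar R :=
  ereal_inf [set edge_number R H | H in
             [set H : forall n, rel (V n) | graph_seq H /\ coarse_eq G H]].

Definition large_girth (V : nat -> finType) (G : forall n, rel (V n)) : Prop :=
  forall k : nat, (1 <= k)%N -> exists nk, forall n, (nk <= n)%N ->
    forall c : seq (V n), uniq c -> cycle (G n) c -> (3 <= size c)%N ->
      (k < size c)%N.

(* Let H be a graph sequence with H ~ G, with constants L1 and L2.  Route
   every edge of G_n through a walk of length at most L2 in H_n, and
   every edge of H_n through a walk of length at most L1 in G_n.  Composing
   the two, each edge xy of G_n is replaced by a walk of length at most L1 L2
   in G_n from x to y; closed up by xy itself this is a closed walk shorter
   than the girth of G_n, hence it uses every edge an even number of times.
   Over F_2 the two routing matrices thus multiply to the identity on the
   edges of G_n, so |E(G_n)| <= |E(H_n)| for large n and e(G) <= e(H). *)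

From HB Require Import structures.
From mathcomp Require Import all_boot all_order all_algebra.
From mathcomp Require Import all_classical all_reals all_analysis.
From mathcomp Require Import zify.
Set Implicit Arguments. Unset Strict Implicit. Unset Printing Implicit Defensive.
Import Order.TTheory GRing.Theory Num.Theory.

Local Open Scope ring_scope.

Lemma addKr_F2 (a b : 'F_2) : a + (a + b) = b.
Proof. exact/addKr_pchar2/pchar_Fp. Qed.

Lemma oppr_F2 (a : 'F_2) : - a = a.
Proof. exact/oppr_pchar2/pchar_Fp. Qed.

Lemma leq_card_biorthogonal (F : fieldType) (I J : finType) (A : {set I}) (B : {set J})
    (u : I -> J -> F) (v : J -> I -> F) :
  {in A &, forall i i', \sum_(j in B) u i j * v j i' = (i == i')%:R} ->
  (#|A| <= #|B|)%N.
Proof.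
move=> uv.
pose U := \matrix_(i < #|A|, j < #|B|) u (enum_val i) (enum_val j).
pose W := \matrix_(j < #|B|, i < #|A|) v (enum_val j) (enum_val i).
have UW : U *m W = 1%:M.
  apply/matrixP => i i'; rewrite !mxE.
  under eq_bigr => j _ do rewrite !mxE.
  rewrite -(big_enum_val (fun j => u (enum_val i) j * v j (enum_val i'))).
  by rewrite uv ?enum_valP // (inj_eq enum_val_inj).
have := mxrankM_maxl U W; rewrite UW mxrank1 => /leq_trans; apply.
exact: rank_leq_col.
Qed.

Section WalkVectors.
Variable T : finType.
Implicit Types (e : rel T) (x y z : T) (p q : seq T) (c : {set T}).

Definition edge_set e : {set {set T}} :=
  [set A | [exists x, exists y, e x y && (A == [set x; y])]].

Lemma edge_setP e c : reflect (exists x y, e x y /\ c = [set x; y]) (c \in edge_set e).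
Proof.
apply: (iffP idP); rewrite inE.
  by case/existsP => x /existsP [y /andP [exy /eqP ->]]; exists x, y.
case=> x [y [exy ->]]; apply/existsP; exists x.
by apply/existsP; exists y; rewrite exy /=.
Qed.

Lemma mem_edge_set e x y : e x y -> [set x; y] \in edge_set e.
Proof. by move=> exy; apply/edge_setP; exists x, y. Qed.

Definition girth_gt e k :=
  forall s : seq T, uniq s -> cycle e s -> (3 <= size s)%N -> (k < size s)%N.

Definition walk_edges x p : seq {set T} := pairmap (fun a b => [set a; b]) x p.

Definition walk_vec x p c : 'F_2 := (count_mem c (walk_edges x p))%:R.

Lemma walk_vec_nil x c : walk_vec x [::] c = 0.
Proof. by []. Qed.

Lemma walk_vec_cons x y p c :
  walk_vec x (y :: p) c = ([set x; y] == c)%:R + walk_vec y p c.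
Proof. by rewrite /walk_vec /= natrD. Qed.

Lemma walk_vec_cat x p q c :
  walk_vec x (p ++ q) c = walk_vec x p c + walk_vec (last x p) q c.
Proof. by rewrite /walk_vec /walk_edges pairmap_cat count_cat natrD. Qed.

Lemma last_rev_belast x p : last (last x p) (rev (belast x p)) = x.
Proof. by case: p => [|y p] //=; rewrite rev_cons last_rcons. Qed.

Lemma rev_walk e x p : symmetric e -> path e x p ->
  path e (last x p) (rev (belast x p)) /\ (size (rev (belast x p)) = size p)%N.
Proof.
move=> e_sym ep; rewrite size_rev size_belast; split => //.
by rewrite rev_path (eq_path (e' := e)) // => a b; rewrite e_sym.
Qed.

Lemma walk_vec_rev x p c : walk_vec (last x p) (rev (belast x p)) c = walk_vec x p c.
Proof.
elim: p x => [|y p IH] x //=.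
rewrite rev_cons -cats1 walk_vec_cat IH last_rev_belast walk_vec_cons walk_vec_nil.
by rewrite addr0 addrC walk_vec_cons finset.setUC.
Qed.

Lemma walk_vec_out e x p c : path e x p -> c \notin edge_set e -> walk_vec x p c = 0.
Proof.
elim: p x => [|y p IH] x //= /andP [exy ep] ce.
rewrite walk_vec_cons IH // addr0.
by case: eqP ce => // <-; rewrite mem_edge_set.
Qed.

Lemma set2_eq_swap x y x' y' :
  [set x; y] = [set x'; y'] -> (x', y') != (x, y) -> (x', y') = (y, x).
Proof.
move=> E; have := set21 x y; have := set22 x y; have := set21 x' y'; have := set22 x' y'.
rewrite -{1 2}E {3 4}E !in_set2.
by do ![case/orP => /eqP ?]; subst; rewrite ?eqxx.
Qed.

Lemma split_simple_loop x p : ~~ uniq (x :: p) ->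
  exists p1 l p2,
    [/\ p = p1 ++ l ++ p2, l != [::], uniq l & last (last x p1) l = last x p1].
Proof.
elim: p x => [|y p IH] x //.
have [uyp|/IH [p1 [l [p2 [-> ? ? ?]]]]] := boolP (uniq (y :: p)); last first.
  by move=> _; exists (y :: p1), l, p2.
rewrite cons_uniq uyp andbT negbK.
move: (y :: p) uyp => s us xs; case/splitPr: xs us => l p2.
rewrite -cat_rcons cat_uniq => /andP [ul _].
exists [::], (rcons l x), p2; split; rewrite ?cat_rcons ?last_rcons //.
by case: l {ul}.
Qed.

Lemma walk_vec_closed e k x p : irreflexive e -> girth_gt e k ->
  path e x p -> last x p = x -> (size p <= k)%N -> forall c, walk_vec x p c = 0.
Proof.
move=> irr girth; have [n] := ubnP (size p); elim: n x p => // n IH x p.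
move=> /ltnSE sz_p ep closed le_k c.
have [uxp|/split_simple_loop [p1 [l [p2 [def_p l0 ul cl]]]]] := boolP (uniq (x :: p)).
  case: p uxp closed {sz_p ep le_k} => [|y p] //= /andP [xNp _] closed.
  by move: (mem_last y p); rewrite closed (negbTE xNp).
set z := last x p1 in cl; move: ep; rewrite def_p !cat_path -/z cl => /and3P [ep1 el ep2].
(* The simple loop l is too short to be a cycle of e, so it is a backtrack
   [z; y; z], whose two traversals of the edge zy cancel mod 2. *)
have size_l : (size l < 3)%N.
  have cyc : cycle e l by rewrite (cycle_path z) cl.
  rewrite ltnNge; apply/negP => /(girth _ ul cyc).
  by move: le_k; rewrite def_p !size_cat; lia.
case: l l0 ul cl el size_l def_p => [|y [|y' [|? ?]]] //=.
  by move=> _ _ -> /andP []; rewrite irr.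
move=> _ _ -> _ _ def_p.
have -> : walk_vec x (p1 ++ [:: y, z & p2]) c = walk_vec x (p1 ++ p2) c.
  by rewrite !walk_vec_cat -/z !walk_vec_cons finset.setUC addKr_F2.
apply: IH; first by move: sz_p; rewrite def_p !size_cat /=; lia.
- by rewrite cat_path ep1.
- by rewrite last_cat -[RHS]closed def_p last_cat.
- by move: le_k; rewrite def_p !size_cat /=; lia.
Qed.
Section Rerouting.
Variables (e1 e2 : rel T) (L : nat) (route : T -> T -> seq T).
Hypothesis route_walk : forall x y, e1 x y ->
  [/\ path e2 x (route x y), last x (route x y) = y & (size (route x y) <= L)%N].

Definition reroute x p := flatten (pairmap route x p).

Lemma reroute_walk x p : path e1 x p ->
  [/\ path e2 x (reroute x p), last x (reroute x p) = last x p
    & (size (reroute x p) <= L * size p)%N].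
Proof.
elim: p x => [|y p IH] x /=; first by rewrite muln0.
case/andP => /route_walk [r_path r_last r_size] /IH [p_path p_last p_size].
rewrite /reroute /= cat_path last_cat size_cat r_last r_path p_last mulnS.
by rewrite leq_add.
Qed.

Lemma walk_vec_reroute (vec : {set T} -> {set T} -> 'F_2) :
  (forall x y, e1 x y -> walk_vec x (route x y) =1 vec [set x; y]) ->
  forall x p c, path e1 x p ->
  walk_vec x (reroute x p) c = \sum_b walk_vec x p b * vec b c.
Proof.
move=> route_vec x p c; elim: p x => [|y p IH] x /=.
  by move=> _; rewrite big1 // => b _; rewrite mul0r.
case/andP => exy ep; have [_ r_last _] := route_walk exy.
rewrite walk_vec_cat r_last IH // route_vec //; symmetry.
under eq_bigr => b _ do rewrite walk_vec_cons mulrDl.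
rewrite big_split /= (bigD1 [set x; y]) //= eqxx mul1r big1 ?addr0 // => b.
by rewrite eq_sym => /negbTE ->; rewrite mul0r.
Qed.

End Rerouting.

Lemma exists_edge_routing (e1 e2 : rel T) L : symmetric e2 ->
    (forall x y, e1 x y -> walk_le e2 x y L) ->
  exists route : T -> T -> seq T, exists vec : {set T} -> {set T} -> 'F_2,
  forall x y, e1 x y ->
  [/\ path e2 x (route x y), last x (route x y) = y, (size (route x y) <= L)%N
    & walk_vec x (route x y) =1 vec [set x; y]].
Proof.
move=> e2_sym e1_walk.
have [r r_walk] : exists r : T -> T -> seq T, forall x y, e1 x y ->
    [/\ path e2 x (r x y), last x (r x y) = y & (size (r x y) <= L)%N].
  have /choice [f f_walk] : forall xy : T * T, exists q : seq T, e1 xy.1 xy.2 ->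
      [/\ path e2 xy.1 q, last xy.1 q = xy.2 & (size q <= L)%N].
    by move=> [x y]; have [/e1_walk [q []]|_] := boolP (e1 x y); [exists q|exists [::]].
  by exists (fun x y => f (x, y)) => x y /(f_walk (x, y)).
(* An edge is routed along r in the orientation chosen by rep and along the
   reversed walk in the other one, so the walk vector depends on the edge only. *)
pose rep b := [pick xy : T * T | e1 xy.1 xy.2 && (b == [set xy.1; xy.2])].
exists (fun x y =>
  if rep [set x; y] == Some (x, y) then r x y else rev (belast y (r y x))).
exists (fun b c => if rep b is Some (x, y) then walk_vec x (r x y) c else 0).
move=> x y exy; rewrite /rep.
case: pickP => [[x' y'] /= /andP [exy' /eqP eq_xy]|/(_ (x, y))]; last first.
  by rewrite /= exy eqxx.
case: eqP => [[-> ->]|/eqP/(set2_eq_swap eq_xy) [def_x' def_y']].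
  by have [? ? ?] := r_walk x y exy.
rewrite def_x' def_y' in exy' *; have [r_path r_last r_size] := r_walk y x exy'.
have [rev_path rev_size] := rev_walk e2_sym r_path.
rewrite r_last in rev_path; split => //.
- by rewrite -{1}r_last last_rev_belast.
- by rewrite rev_size.
- by move=> c; rewrite -{1}r_last walk_vec_rev.
Qed.

Lemma leq_n_edges_girth (G H : rel T) (L1 L2 : nat) :
    symmetric G -> symmetric H -> irreflexive G -> girth_gt G (L1 * L2).+1 ->
    (forall x y, H x y -> walk_le G x y L1) ->
    (forall x y, G x y -> walk_le H x y L2) ->
  (n_edges G <= n_edges H)%N.
Proof.
move=> G_sym H_sym G_irr G_girth HG GH.
have [rGH [uGH GH_route]] := exists_edge_routing H_sym GH.
have [rHG [vHG HG_route]] := exists_edge_routing G_sym HG.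
have HG_walk : forall x y, H x y ->
    [/\ path G x (rHG x y), last x (rHG x y) = y & (size (rHG x y) <= L1)%N].
  by move=> x y /HG_route [].
have HG_vec : forall x y, H x y -> walk_vec x (rHG x y) =1 vHG [set x; y].
  by move=> x y /HG_route [].
apply: (leq_card_biorthogonal (u := uGH) (v := vHG)).
move=> _ c /edge_setP [x [y [Gxy ->]]] _.
have [p_path p_last p_size p_vec] := GH_route x y Gxy.
set p := rGH x y in p_path p_last p_size p_vec *.
have [q_path q_last q_size] := reroute_walk HG_walk p_path.
set q := reroute rHG x p in q_path q_last q_size *.
transitivity (walk_vec x q c).
  rewrite (walk_vec_reroute HG_walk HG_vec) // big_mkcond; apply: eq_bigr => b _.
  by rewrite -p_vec; case: ifPn => // /(walk_vec_out p_path) ->; rewrite mul0r.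
(* q followed by the edge yx is a closed walk shorter than the girth. *)
have := walk_vec_closed G_irr G_girth (x := x) (p := rcons q x) _ _ _ c.
rewrite rcons_path last_rcons size_rcons q_path q_last p_last G_sym Gxy ltnS.
rewrite -cats1 walk_vec_cat walk_vec_cons walk_vec_nil addr0 q_last p_last.
have q_short : (size q <= L1 * L2)%N.
  by rewrite (leq_trans q_size) // leq_mul2l p_size orbT.
move=> /(_ isT erefl q_short) /eqP.
by rewrite addr_eq0 oppr_F2 finset.setUC => /eqP.
Qed.
End WalkVectors.

Local Open Scope classical_set_scope.

Lemma le_limn_einf (R : realType) (u v : (\bar R)^nat) :
  (\forall n \near \oo, (u n <= v n)%E) -> (limn_einf u <= limn_einf v)%E.
Proof.
move=> [n0 _ uv]; rewrite !limn_einf_lim.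
apply: lee_lim; [exact: is_cvg_einfs|exact: is_cvg_einfs|].
near=> n; apply: le_ereal_inf_tmp => _ [k /= nk <-].
apply: le_trans (uv k _); first by apply: ereal_inf_lbound; exists k.
by apply: leq_trans nk; near: n; exists n0.
Unshelve. all: end_near. Qed.

Lemma edge_number_le (R : realType) (V : nat -> finType) (G H : forall n, rel (V n)) n0 :
    (forall n, (n0 <= n)%N -> (n_edges (G n) <= n_edges (H n))%N) ->
  (edge_number R G <= edge_number R H)%E.
Proof.
move=> GH; apply: le_limn_einf; exists n0 => // n /GH le_GH.
by rewrite lee_fin ler_wpM2r ?invr_ge0 ?ler0n ?ler_nat.
Qed.

Lemma walk_le_edge (T : finType) (e : rel T) x y : e x y -> walk_le e x y 1.
Proof. by move=> exy; exists [:: y]; rewrite /= exy. Qed.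

Lemma coarse_le_edge (V : nat -> finType) (G H : forall n, rel (V n)) :
  coarse_le H G -> exists L, forall n x y, H n x y -> walk_le (G n) x y L.
Proof.
by case=> L [_ HG]; exists L => n x y /walk_le_edge /HG; rewrite muln1.
Qed.

Lemma coarse_eq_refl (V : nat -> finType) (G : forall n, rel (V n)) : coarse_eq G G.
Proof. by split; exists 1%N; split => // n x y k; rewrite mul1n. Qed.

Theorem theorem1 (R : realType) (V : nat -> finType) (G : forall n, rel (V n)) :
  graph_seq G -> large_girth G -> edge_number R G = cost R G.
Proof.
move=> G_seq G_girth; have [G_simple _] := G_seq.
apply/eqP; rewrite eq_le; apply/andP; split.
- apply/ereal_infP => _ [H [[H_simple _] [HG GH]] <-].
  have [L1 {}HG] := coarse_le_edge HG; have [L2 {}GH] := coarse_le_edge GH.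
  have [n0 girth_n] := G_girth (L1 * L2).+1 isT.
  apply: (@edge_number_le _ _ _ _ n0) => n /girth_n girth.
  have [G_sym G_irr] := G_simple n; have [H_sym _] := H_simple n.
  exact: leq_n_edges_girth G_sym H_sym G_irr girth (HG n) (GH n).
- apply: ereal_inf_lbound; exists G => //.
  by split; [exact: G_seq | exact: coarse_eq_refl].
Qed.
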